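(* For all integers $s\geq 1$, $A_{231,321}(K_{s,2}^\alpha)=2^{s-1}(s-1)+1$.
   Context: $K^\alpha_{s,2}$ is the poset on $[2s]$ whose order is generated by the covering relations $i\lessdot i+1$ for $1\le i\le s-1$ and $i\lessdot i+s$ for $1\le i\le s$ (the comb $K_{s,2}$ with $\alpha$-labeling $e_{i,j}\mapsto (j-1)s+i$). A linear extension is a permutation of $[2s]$ in which $x$ precedes $y$ whenever $x<y$ in the poset. $A_{231,321}(P)$ denotes the number of linear extensions of $P$ that avoid both patterns $231$ and $321$. *)

From mathcomp Require Import all_boot.
Set Implicit Arguments. Unset Strict Implicit. Unset Printing Implicit Defensive.

(* Permutations of [n] = {1..n} are represented as sequences (one-line notation)
   w = [:: w_1; ...; w_n] that are rearrangements of iota 1 n. *)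

(* Covering relations of the comb poset K^alpha_{s,2} on [2s]:
   i <. i+1 for 1 <= i <= s-1, and i <. i+s for 1 <= i <= s. *)
Definition comb_cover (s x y : nat) : bool :=
  [&& 1 <= x, x <= s - 1 & y == x + 1] || [&& 1 <= x, x <= s & y == x + s].

(* Strict order of the poset: transitive closure of the covering relation.
   reach s k x = elements reachable from x by a nonempty chain of at most k
   covers (within [2s]); every chain has length < 2s. *)
Fixpoint comb_reach (s k x : nat) : seq nat :=
  if k is k'.+1 then
    [seq y <- iota 1 (2 * s) |
      comb_cover s x y || has (fun z => comb_cover s z y) (comb_reach s k' x)]
  else [::].

Definition comb_lt (s x y : nat) : bool := y \in comb_reach s (2 * s) x.

Definition precedes (w : seq nat) (x y : nat) : bool := index x w < index y w.

Definition lin_ext (s : nat) (w : seq nat) : bool :=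
  perm_eq w (iota 1 (2 * s)) &&
  all (fun x => all (fun y => comb_lt s x y ==> precedes w x y) (iota 1 (2 * s)))
      (iota 1 (2 * s)).

Definition contains231 (w : seq nat) : bool :=
  let n := size w in
  has (fun i => has (fun j => has (fun k =>
        [&& i < j, j < k & (nth 0 w k < nth 0 w i < nth 0 w j)])
      (iota 0 n)) (iota 0 n)) (iota 0 n).

Definition contains321 (w : seq nat) : bool :=
  let n := size w in
  has (fun i => has (fun j => has (fun k =>
        [&& i < j, j < k & (nth 0 w k < nth 0 w j < nth 0 w i)])
      (iota 0 n)) (iota 0 n)) (iota 0 n).

Definition A231_321_comb (s : nat) : nat :=
  count (fun w => lin_ext s w && ~~ contains231 w && ~~ contains321 w)
        (permutations (iota 1 (2 * s))).

From mathcomp Require Import all_boot zify.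
Set Implicit Arguments. Unset Strict Implicit. Unset Printing Implicit Defensive.

(* A word with distinct letters avoids both 231 and 321 exactly when no letter has
   two larger letters to its left.  Let N(m) count such linear extensions of the comb
   restricted to {m+1, ..., 2s}.  The smallest letter m+1 is preceded by at most one
   letter M, and then m+1, ..., M-1 must follow M immediately and in increasing order:
   the word is a block M, m+1, ..., M-1 followed by a word counted by N(M).  The covers
   i <. i+1 (i < s) and i <. i+s allow this block exactly when M = m+1 or s < M <= m+s,
   so N(m) is the sum of N(M) over these M.  For m >= s every M is allowed, whence
   N(m) = 2^(2s-m-1); for m < s the window s < M <= m+s contributes
   2^(s-1) - 2^(s-m-1), and N(0) = 2^(s-1)(s-1) + 1 follows. *)

Definition has_triple (R : nat -> nat -> nat -> bool) (w : seq nat) : bool :=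
  let n := size w in
  has (fun i => has (fun j => has (fun k =>
        [&& i < j, j < k & R (nth 0 w i) (nth 0 w j) (nth 0 w k)])
      (iota 0 n)) (iota 0 n)) (iota 0 n).

Lemma has_tripleP (R : nat -> nat -> nat -> bool) w :
  reflect (exists i j k, [/\ i < j, j < k, k < size w &
             R (nth 0 w i) (nth 0 w j) (nth 0 w k)])
          (has_triple R w).
Proof.
apply: (iffP hasP) => [[i _ /hasP [j _ /hasP [k]]]|[i [j [k [ij jk kw Rijk]]]]].
  by rewrite mem_iota => /andP [_ kw] /and3P [ij jk Rijk]; exists i, j, k.
have mem_w l : l <= k -> l \in iota 0 (size w) by move=> lk; rewrite mem_iota; lia.
exists i; first by apply: mem_w; lia.
apply/hasP; exists j; first by apply: mem_w; lia.
by apply/hasP; exists k; rewrite ?mem_w ?ij ?jk.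
Qed.

Fixpoint avoids231_321 (w : seq nat) : bool :=
  if w is x :: t then pairwise (fun y z => (x <= z) || (y <= z)) t && avoids231_321 t
  else true.

Lemma avoids231_321P w :
  reflect (forall i j k, i < j -> j < k -> k < size w ->
             (nth 0 w i <= nth 0 w k) || (nth 0 w j <= nth 0 w k))
          (avoids231_321 w).
Proof.
elim: w => [|x t IH] /=; first by apply: ReflectT => i j k _ _.
apply: (iffP andP) => [[/(pairwiseP 0) head_ok /IH tail_ok]|ok].
  case=> [|i] [|j] [|k] //= ij jk kt; last exact: tail_ok.
  by apply: head_ok; rewrite ?unfold_in /=; lia.
split; last by apply/IH => i j k ij jk kt; apply: (ok i.+1 j.+1 k.+1).
by apply/(pairwiseP 0) => j k jt kt jk; apply: (ok 0 j.+1 k.+1).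
Qed.

Lemma avoids231_321E w :
  uniq w -> avoids231_321 w = ~~ contains231 w && ~~ contains321 w.
Proof.
move=> uw; rewrite -negb_or.
rewrite (_ : contains231 w = has_triple (fun a b c => c < a < b) w) //.
rewrite (_ : contains321 w = has_triple (fun a b c => c < b < a) w) //.
apply/idP/idP.
  move/avoids231_321P=> ok; apply/negP.
  case/orP=> /has_tripleP [i [j [k [ij jk kw /andP [lt1 lt2]]]]];
  by move: (ok i j k ij jk kw); rewrite !(ltn_geF lt1) (ltn_geF (ltn_trans lt1 lt2)).
move=> no_pat; apply/avoids231_321P => i j k ij jk kw.
rewrite -[_ || _]negbK negb_or -!ltnNge; apply: contra no_pat => /andP [ki kj].
have jw : j < size w by apply: ltn_trans jk kw.
have : nth 0 w i != nth 0 w j.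
  by rewrite nth_uniq ?neq_ltn ?ij // (ltn_trans ij jw).
case: ltngtP => // [ij'|ji'] _; apply/orP; [left|right];
  by apply/has_tripleP; exists i, j, k; rewrite ?ki ?kj ?ij' ?ji'.
Qed.

Lemma avoids231_321_cat u v : {in u & v, forall x y, x < y} ->
  avoids231_321 (u ++ v) = avoids231_321 u && avoids231_321 v.
Proof.
elim: u => [|x u IH] //= uv; rewrite IH => [|y z yu]; last exact/uv/mem_behead.
have x_lt : {in v, forall z, x < z} by move=> z; apply/uv/mem_head.
suff -> : pairwise (fun y z => (x <= z) || (y <= z)) (u ++ v) =
          pairwise (fun y z => (x <= z) || (y <= z)) u by rewrite andbA.
rewrite pairwise_cat; apply/and3P/idP => [[] // | pair_u]; split=> //.
  by apply/allrelP => y z _ zv; rewrite ltnW ?x_lt.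
by apply/(pairwiseP 0) => i j iv jv _; rewrite ltnW ?x_lt ?mem_nth.
Qed.

Lemma avoids231_321_cons_sorted x w : sorted ltn w -> avoids231_321 (x :: w).
Proof.
elim: w x => [|y w IH] x // sorted_yw.
apply/andP; split; last exact: IH (path_sorted sorted_yw).
move: sorted_yw; rewrite sorted_pairwise; last exact: ltn_trans.
by apply: sub_pairwise => a b /ltnW ->; rewrite orbT.
Qed.

Lemma avoids231_321_iota_prefix M a L v t :
  a + L <= M -> {in v, forall z, M < z} -> avoids231_321 (M :: t) ->
  perm_eq t (iota a L ++ v) -> exists2 t', t = iota a L ++ t' & perm_eq t' v.
Proof.
move=> aLM vM; elim: L a t aLM => [|L IH] a t aLM avoid_t perm_t; first by exists t.
case: t avoid_t perm_t => [|y t] avoid_t perm_t.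
  by move: (perm_size perm_t); rewrite size_cat size_iota.
have a_in_yt : a \in y :: t by rewrite (perm_mem perm_t) mem_cat mem_head.
case: (eqVneq y a) avoid_t perm_t => [-> | ya] avoid_t perm_t.
  move: avoid_t perm_t => /= /andP [/andP [_ pair_t] /andP [_ avoid_t]].
  rewrite perm_cons => perm_t.
  have avoid_Mt : avoids231_321 (M :: t) by rewrite /= pair_t.
  have [|t' -> perm_t'] := IH a.+1 t _ avoid_Mt perm_t; first by rewrite addSnnS.
  by exists t'.
have a_in_t : a \in t by move: a_in_yt; rewrite inE eq_sym (negbTE ya).
have a_lt_y : a < y.
  have : y \in iota a L.+1 ++ v by rewrite -(perm_mem perm_t) mem_head.
  rewrite mem_cat mem_iota => /orP [/andP [ay _] | /vM My]; last by lia.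
  by rewrite ltn_neqAle eq_sym ya.
move: avoid_t => /= /andP [/andP [/allP /(_ a a_in_t)]].
by rewrite (ltn_geF a_lt_y) orbF; lia.
Qed.

Lemma pairwise_precedesP (r : rel nat) w : irreflexive r -> uniq w ->
  reflect {in w &, forall x y, r x y -> precedes w x y}
          (pairwise (fun x y => ~~ r y x) w).
Proof.
move=> irr_r uw; apply: (iffP (pairwiseP 0)) => [ok x y xw yw rxy | ok i j iw jw ij].
  rewrite /precedes; case: ltngtP => // [ji | eq_ij]; last first.
    by move: rxy; rewrite -(nth_index 0 xw) -(nth_index 0 yw) eq_ij irr_r.
  have := ok (index y w) (index x w); rewrite !nth_index // rxy; apply=> //;
    by rewrite unfold_in /= index_mem.
apply/negP => /(ok _ _ (mem_nth 0 jw) (mem_nth 0 iw)).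
by rewrite /precedes !index_uniq // ltnNge ltnW.
Qed.

Definition respects_covers (s : nat) (w : seq nat) : bool :=
  pairwise (fun x y => ~~ comb_cover s y x) w.

Lemma comb_cover_lt s x y : comb_cover s x y -> x < y.
Proof. by case/orP=> /and3P [? ? /eqP ->]; lia. Qed.

Lemma comb_reach_sub s k x : {subset comb_reach s k x <= iota 1 (2 * s)}.
Proof. by case: k => [|k] // y; rewrite mem_filter => /andP []. Qed.

Lemma comb_reach_precedes s w k x y :
  {in w &, forall x y, comb_cover s x y -> precedes w x y} ->
  {subset iota 1 (2 * s) <= w} -> x \in w -> y \in comb_reach s k x ->
  precedes w x y.
Proof.
move=> cover_prec sub_w xw; elim: k y => [|k IH] y //=.
rewrite mem_filter => /andP [/orP [cover_xy | /hasP [z reach_z cover_zy]] /sub_w yw].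
  exact: cover_prec.
have zw : z \in w by apply/sub_w/(comb_reach_sub reach_z).
by apply: ltn_trans (IH z reach_z) _; apply: cover_prec.
Qed.

Lemma lin_extE s w :
  perm_eq w (iota 1 (2 * s)) -> lin_ext s w = respects_covers s w.
Proof.
move=> perm_w; have uw : uniq w by rewrite (perm_uniq perm_w) iota_uniq.
have mem_w := perm_mem perm_w.
have irr_cover : irreflexive (comb_cover s).
  by move=> x; apply/negP => /comb_cover_lt; rewrite ltnn.
rewrite /lin_ext perm_w; apply/idP/(pairwise_precedesP irr_cover uw).
  move=> /allP lin x y xw yw cover_xy.
  have [xU yU] : x \in iota 1 (2 * s) /\ y \in iota 1 (2 * s) by rewrite -!mem_w.
  have lt_xy : comb_lt s x y.
    have : 0 < 2 * s by move: yU; rewrite mem_iota; lia.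
    by rewrite /comb_lt; case: (2 * s) => [|k] // _; rewrite /= mem_filter cover_xy yU.
  by move/allP: (lin x xU) => /(_ y yU); rewrite lt_xy.
move=> cover_prec; apply/allP => x; rewrite -mem_w => xw; apply/allP => y _.
by apply/implyP; apply: comb_reach_precedes cover_prec _ xw => z; rewrite mem_w.
Qed.

Definition avoiding_ext (s m : nat) (t : seq nat) : bool :=
  [&& perm_eq t (iota m.+1 (2 * s - m)), respects_covers s t & avoids231_321 t].

Definition block (m M : nat) : seq nat := M :: iota m.+1 (M - m.+1).
Arguments block : simpl never.

Definition leader (s m M : nat) : bool := (M == m.+1) || (s < M <= m + s).

Definition leaders (s m : nat) : seq nat :=
  [seq M <- iota m.+1 (2 * s - m) | leader s m M].

Lemma avoiding_ext_top s t : avoiding_ext s (2 * s) t = (t == [::]).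
Proof.
rewrite /avoiding_ext subnn; case: t => [|x t] //.
by apply/negbTE/negP => /and3P [/perm_size].
Qed.

Lemma perm_iota_block m M n : m < M <= n ->
  perm_eq (iota m.+1 (n - m)) (block m M ++ iota M.+1 (n - M)).
Proof.
move=> /andP [mM Mn]; have -> : n - m = M - m.+1 + (n - M).+1 by lia.
rewrite iotaD (_ : m.+1 + (M - m.+1) = M); last by lia.
by apply/permP => p; rewrite /= !count_cat /=; lia.
Qed.

Lemma all_no_cover_block s m M : m < M <= 2 * s ->
  all (fun y => ~~ comb_cover s y M) (iota m.+1 (M - m.+1)) = leader s m M.
Proof.
move=> /andP [mM M2s]; rewrite /leader /comb_cover.
apply/allP/idP => [no_cover | lead y].
  apply/negPn/negP => not_leader.
  have [Ms | sM] := leqP M s.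
    by move: (no_cover M.-1); rewrite mem_iota; lia.
  by move: (no_cover (M - s)); rewrite mem_iota; lia.
by rewrite mem_iota; lia.
Qed.

Lemma avoiding_ext_block s m M t : m < M <= 2 * s ->
  avoiding_ext s m (block m M ++ t) = leader s m M && avoiding_ext s M t.
Proof.
move=> mM2s; rewrite /avoiding_ext (permPr (perm_iota_block mM2s)) perm_cat2l.
case perm_t: (perm_eq t _); last by rewrite andbF.
have t_gt : {in t, forall y, M < y}.
  by move=> y; rewrite (perm_mem perm_t) mem_iota => /andP [].
have block_lt : {in block m M & t, forall x y, x < y}.
  move=> x y; rewrite inE mem_iota => /orP [/eqP -> | /andP [_ xM]] /t_gt; first by [].
  by apply: ltn_trans; lia.
rewrite avoids231_321_cat // avoids231_321_cons_sorted ?iota_ltn_sorted //.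
rewrite /respects_covers pairwise_cat.
have -> : allrel (fun x y => ~~ comb_cover s y x) (block m M) t.
  apply/allrelP => x y xb yt; apply/negP => /comb_cover_lt.
  by rewrite ltnNge ltnW ?block_lt.
rewrite [pairwise _ (block m M)]/= all_no_cover_block //.
have -> : pairwise (fun x y => ~~ comb_cover s y x) (iota m.+1 (M - m.+1)).
  move: (iota_ltn_sorted m.+1 (M - m.+1)); rewrite sorted_pairwise; last exact: ltn_trans.
  by apply: sub_pairwise => x y xy; apply/negP => /comb_cover_lt; rewrite ltnNge ltnW.
by rewrite /= andbT andbA.
Qed.

Lemma avoiding_ext_block_shape s m w : m < 2 * s -> avoiding_ext s m w ->
  exists M t, [/\ m < M, M <= 2 * s & w = block m M ++ t].
Proof.
move=> m2s; case: w => [|M t] /and3P [perm_w _ avoid_w].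
  by move: (perm_size perm_w); rewrite size_iota /=; lia.
have : M \in iota m.+1 (2 * s - m) by rewrite -(perm_mem perm_w) mem_head.
rewrite mem_iota => /andP [mM M_lt]; have M2s : M <= 2 * s by lia.
have mM2s : m < M <= 2 * s by rewrite mM.
move: perm_w; rewrite (permPr (perm_iota_block mM2s)) [block m M ++ _]/= perm_cons.
move=> perm_t; have aLM : m.+1 + (M - m.+1) <= M by lia.
have gt_M : {in iota M.+1 (2 * s - M), forall z, M < z}.
  by move=> z; rewrite mem_iota => /andP [].
have [t' -> _] := avoids231_321_iota_prefix aLM gt_M avoid_w perm_t.
by exists M, t'.
Qed.

Fixpoint avoiding_exts (s k m : nat) : seq (seq nat) :=
  if k is k'.+1 then
    if m < 2 * s then [seq block m M ++ t | M <- leaders s m, t <- avoiding_exts s k' M]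
    else [:: [::]]
  else [:: [::]].

Lemma mem_avoiding_exts s k m t : 2 * s - m <= k -> m <= 2 * s ->
  (t \in avoiding_exts s k m) = avoiding_ext s m t.
Proof.
elim: k m t => [|k IH] m t fuel m2s /=.
  by rewrite (_ : m = 2 * s) ?avoiding_ext_top ?inE //; lia.
case: ltnP => [m_lt | m_ge]; last first.
  by rewrite (_ : m = 2 * s) ?avoiding_ext_top ?inE //; lia.
apply/allpairsPdep/idP => [[M [t' [lead_M t'_ext ->]]] | ext_t].
  move: lead_M; rewrite mem_filter mem_iota => /andP [lead_M /andP [mM M2s]].
  by rewrite avoiding_ext_block ?lead_M -?IH //; lia.
have [M [t' [mM M2s def_t]]] := avoiding_ext_block_shape m_lt ext_t.
move: ext_t; rewrite def_t avoiding_ext_block ?mM // => /andP [lead_M ext_t'].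
have t'_in : t' \in avoiding_exts s k M by rewrite IH //; lia.
by exists M, t'; rewrite mem_filter mem_iota lead_M t'_in; split=> //; lia.
Qed.

Lemma avoiding_exts_uniq s k m : uniq (avoiding_exts s k m).
Proof.
elim: k m => [|k IH] m //=; case: ifP => // _.
apply: allpairs_uniq_dep => [|M _|]; rewrite ?filter_uniq ?iota_uniq //.
move=> [M t] [M' t'] _ _ /= [<-] /(congr1 (drop (M - m.+1))).
by rewrite !drop_size_cat ?size_iota // => ->.
Qed.

Definition num_avoiding_exts (s m : nat) : nat :=
  count (avoiding_ext s m) (permutations (iota m.+1 (2 * s - m))).

Lemma size_avoiding_exts s k m : 2 * s - m <= k -> m <= 2 * s ->
  size (avoiding_exts s k m) = num_avoiding_exts s m.
Proof.
move=> fuel m2s; rewrite /num_avoiding_exts -size_filter; apply/perm_size/uniq_perm.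
- exact: avoiding_exts_uniq.
- by rewrite filter_uniq ?permutations_uniq.
move=> t; rewrite mem_avoiding_exts // mem_filter mem_permutations.
by apply/idP/andP => [ext_t | []//]; split=> //; case/and3P: ext_t.
Qed.

Lemma num_avoiding_exts_rec s m : m < 2 * s ->
  num_avoiding_exts s m = \sum_(M <- leaders s m) num_avoiding_exts s M.
Proof.
move=> m2s; rewrite -(@size_avoiding_exts s (2 * s - m)) ?(ltnW m2s) //.
rewrite (_ : 2 * s - m = (2 * s - m.+1).+1); last by lia.
rewrite /= m2s size_allpairs_dep sumnE big_map; apply: eq_big_seq => M.
rewrite mem_filter mem_iota => /andP [_ /andP [mM M2s]].
by rewrite size_avoiding_exts //; lia.
Qed.

Lemma leaders_high s m : s <= m -> leaders s m = iota m.+1 (2 * s - m).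
Proof. by move=> sm; apply/all_filterP/allP => M; rewrite mem_iota /leader; lia. Qed.

Lemma leaders_low s m : m < s -> leaders s m = m.+1 :: iota s.+1 m.
Proof.
move=> ms; apply: (irr_sorted_eq ltn_trans ltnn).
- exact/sorted_filter/iota_ltn_sorted/ltn_trans.
- rewrite /= (path_sortedE ltn_trans) iota_ltn_sorted andbT.
  by apply/allP => M; rewrite mem_iota; lia.
by move=> M; rewrite mem_filter inE !mem_iota /leader; lia.
Qed.

Lemma num_avoiding_exts_top s : num_avoiding_exts s (2 * s) = 1.
Proof. by rewrite /num_avoiding_exts /avoiding_ext subnn /=. Qed.

Lemma num_avoiding_exts_double s m : s <= m -> m.+1 < 2 * s ->
  num_avoiding_exts s m = 2 * num_avoiding_exts s m.+1.
Proof.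
move=> sm m2s; have rec_high k : s <= k -> k < 2 * s ->
    num_avoiding_exts s k = \sum_(M <- iota k.+1 (2 * s - k)) num_avoiding_exts s M.
  by move=> sk k2s; rewrite num_avoiding_exts_rec ?leaders_high.
have iota_cons : iota m.+1 (2 * s - m) = m.+1 :: iota m.+2 (2 * s - m.+1).
  by rewrite (_ : 2 * s - m = (2 * s - m.+1).+1) //; lia.
rewrite (rec_high m sm (ltnW m2s)) iota_cons big_cons.
by rewrite -(rec_high m.+1 (leqW sm) m2s) mul2n addnn.
Qed.

Lemma num_avoiding_exts_high s d : d <= s -> num_avoiding_exts s (2 * s - d) = 2 ^ d.-1.
Proof.
elim: d => [|[|d] IH] ds; first by rewrite subn0 num_avoiding_exts_top.
  rewrite num_avoiding_exts_rec ?leaders_high; try lia.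
  have -> : (2 * s - 1).+1 = 2 * s by lia.
  by rewrite (_ : 2 * s - (2 * s - 1) = 1) ?big_seq1 ?num_avoiding_exts_top //; lia.
rewrite num_avoiding_exts_double; try lia.
by rewrite (_ : (2 * s - d.+2).+1 = 2 * s - d.+1) ?IH ?expnS //; lia.
Qed.

Lemma sum_num_avoiding_exts_iota s m : m < s ->
  \sum_(M <- iota s.+1 m) num_avoiding_exts s M + 2 ^ (s - m.+1) = 2 ^ (s - 1).
Proof.
elim: m => [|m IH] ms; first by rewrite big_nil subn1.
have -> : iota s.+1 m.+1 = iota s.+1 m ++ [:: s.+1 + m] by rewrite -[m.+1]addn1 iotaD.
rewrite big_cat big_seq1 -addnA -IH; last by lia.
rewrite (_ : s.+1 + m = 2 * s - (s - m.+1)) ?num_avoiding_exts_high; try lia.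
have -> : s - m.+1 = (s - m.+2).+1 by lia.
by rewrite /= expnS mul2n addnn.
Qed.

Lemma num_avoiding_exts_low s k : k <= s ->
  num_avoiding_exts s (s - k) + 2 ^ k = 2 ^ (s - 1) * k.+1 + 1.
Proof.
elim: k => [|k IH] ks.
  by rewrite (_ : s - 0 = 2 * s - s) ?num_avoiding_exts_high ?subn1 ?muln1; lia.
rewrite num_avoiding_exts_rec ?leaders_low ?big_cons; try lia.
have /sum_num_avoiding_exts_iota : s - k.+1 < s by lia.
rewrite (_ : (s - k.+1).+1 = s - k); last by lia.
rewrite (_ : s - (s - k) = k); last by lia.
rewrite expnS !mulnS; move: (IH (ltnW ks)); lia.
Qed.

Lemma A231_321_combE s : A231_321_comb s = num_avoiding_exts s 0.
Proof.
rewrite /A231_321_comb /num_avoiding_exts subn0; apply: eq_in_count => w.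
rewrite mem_permutations => perm_w.
rewrite lin_extE // -andbA -avoids231_321E ?(perm_uniq perm_w) ?iota_uniq //.
by rewrite /avoiding_ext subn0 perm_w.
Qed.

Theorem mainTheorem11 (s : nat) : 1 <= s ->
  A231_321_comb s = 2 ^ (s - 1) * (s - 1) + 1.
Proof.
move=> s_pos; rewrite A231_321_combE.
have := num_avoiding_exts_low (leqnn s); rewrite subnn.
case: s s_pos => // s _; rewrite subn1 /= expnS !mulnS; lia.
Qed.
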